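(* Let $X,Y$ be metric spaces and equip $X\times Y$ with the maximum metric. Then (i) $\dim_{\mathrm P}(X\times Y)\ge \dim_{\mathrm P}X+\vec{\dim}_{\mathrm P}Y$; (ii) $\vec{\dim}_{\mathrm P}(X\times Y)\ge \vec{\dim}_{\mathrm P}X+\vec{\dim}_{\mathrm P}Y$; (iii) $\underline{\dim}_{\mathrm P}(X\times Y)\ge \underline{\dim}_{\mathrm P}X+\underline{\dim}_{\mathrm P}Y$.
   Context: For a subset $E$ of a metric space and $\delta>0$, $N_\delta(E)$ is the minimal cardinality of a cover of $E$ by sets of diameter at most $\delta$. The lower and upper box dimensions of a nonempty set $E$ are $\underline{\dim}_{\mathrm B}E=\liminf_{\delta\to0}\frac{\log N_\delta(E)}{|\log\delta|}$ and $\overline{\dim}_{\mathrm B}E=\limsup_{\delta\to0}\frac{\log N_\delta(E)}{|\log\delta|}$. The (upper) packing dimension is $\dim_{\mathrm P}E=\inf\{\sup_n\overline{\dim}_{\mathrm B}E_n: E\subseteq\bigcup_n E_n\}$, the lower packing dimension is $\underline{\dim}_{\mathrm P}E=\inf\{\sup_n\underline{\dim}_{\mathrm B}E_n: E\subseteq\bigcup_nE_n\}$ (infima over countable covers), and the directed lower packing dimension is $\vec{\dim}_{\mathrm P}E=\inf\{\sup_n\underline{\dim}_{\mathrm B}E_n: E_n\uparrow E\}$, where $E_n\uparrow E$ means that $(E_n)_{n\in\mathbb N}$ is an increasing sequence of sets with union $E$. *)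

From HB Require Import structures.
From mathcomp Require Import all_boot all_order all_algebra.
From mathcomp Require Import all_classical all_reals ereal exp.
Set Implicit Arguments. Unset Strict Implicit. Unset Printing Implicit Defensive.
Import Order.TTheory GRing.Theory Num.Theory.
Local Open Scope classical_set_scope.
Local Open Scope ring_scope.

Section Dims.
Variable R : realType.

Definition is_metric (T : Type) (d : T -> T -> R) : Prop :=
  (forall x y, 0 <= d x y) /\
  (forall x y, d x y = 0 <-> x = y) /\
  (forall x y, d x y = d y x) /\
  (forall x y z, d x z <= d x y + d y z).

Definition max_metric (T U : Type) (dT : T -> T -> R) (dU : U -> U -> R)
  : T * U -> T * U -> R :=
  fun p q => Num.max (dT p.1 q.1) (dU p.2 q.2).

Variables (T : Type) (d : T -> T -> R).

Definition diam_le (F : set T) (delta : R) : Prop :=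
  forall x y, F x -> F y -> d x y <= delta.

Definition covering_number (E : set T) (delta : R) : \bar R :=
  ereal_inf [set (n%:R)%:E | n in [set n : nat |
    exists F : nat -> set T,
      E `<=` [set x | exists2 i, (i < n)%N & F i x] /\
      forall i, (i < n)%N -> diam_le (F i) delta]].

Definition box_ratio (E : set T) (delta : R) : \bar R :=
  let N := covering_number E delta in
  if N == +oo%E then +oo%E else (ln (fine N) / `|ln delta|)%:E.

Definition lower_box_dim (E : set T) : \bar R :=
  if E == set0 then -oo%E else
  ereal_sup [set ereal_inf [set box_ratio E delta | delta in
                              [set delta : R | 0 < delta < eps]]
            | eps in [set eps : R | 0 < eps]].

Definition upper_box_dim (E : set T) : \bar R :=
  if E == set0 then -oo%E else
  ereal_inf [set ereal_sup [set box_ratio E delta | delta in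
                              [set delta : R | 0 < delta < eps]]
            | eps in [set eps : R | 0 < eps]].

(* countable covers, indexed by nat (finite covers: pad with empty sets) *)
Definition packing_dim (E : set T) : \bar R :=
  ereal_inf [set ereal_sup [set upper_box_dim (En n) | n in [set: nat]]
            | En in [set En : nat -> set T | E `<=` \bigcup_n En n]].

Definition lower_packing_dim (E : set T) : \bar R :=
  ereal_inf [set ereal_sup [set lower_box_dim (En n) | n in [set: nat]]
            | En in [set En : nat -> set T | E `<=` \bigcup_n En n]].

Definition directed_lower_packing_dim (E : set T) : \bar R :=
  ereal_inf [set ereal_sup [set lower_box_dim (En n) | n in [set: nat]]
            | En in [set En : nat -> set T |
                     (forall n, En n `<=` En n.+1) /\ \bigcup_n En n = E]].

End Dims.

From HB Require Import structures.
From mathcomp Require Import all_boot all_order all_algebra.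
From mathcomp Require Import all_classical all_reals ereal exp.
From mathcomp Require Import sequences lra zify.
Import Order.TTheory GRing.Theory Num.Theory.
Local Open Scope classical_set_scope.
Local Open Scope ring_scope.
Set Implicit Arguments. Unset Strict Implicit.

(* If N_{2r}(A) > K then A contains K + 1 points pairwise more than r apart.
   In the maximum metric, choosing such points in A and in every fibre over A
   gives a product-size r-separated set, so N_r is at least the product of the
   two counts; as log(2r)/log r -> 1, dimensions add on a single piece.
   Given a cover (E_n) of X x Y, the fibres of the E_n over each x cover Y, so
   every x has an index (and a scale threshold) from which on its fibre is
   large.  Grouping the points of X by this data gives a countable cover of X,
   one piece of which is large; the corresponding part of E_n lies over it.
   For the packing dimension the cover is first made directed by finite
   unions, which is harmless because the upper box dimension is finitely
   stable. *)

Section Covers.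
Variables (R : realType) (T : Type) (d : T -> T -> R).

Definition coverable (E : set T) (delta : R) (n : nat) : Prop :=
  exists F : nat -> set T,
    E `<=` [set x | exists2 i, (i < n)%N & F i x] /\
    forall i, (i < n)%N -> diam_le d (F i) delta.

Definition covering_gt (E : set T) (delta K : R) : Prop :=
  forall n, coverable E delta n -> K < n%:R.

Definition separated (E : set T) (delta : R) (p : nat) : Prop :=
  exists f : nat -> T,
    (forall i, (i < p)%N -> E (f i)) /\
    (forall i j, (i < p)%N -> (j < p)%N -> i <> j -> delta < d (f i) (f j)).

Lemma covering_gtW E delta K K' :
  K' <= K -> covering_gt E delta K -> covering_gt E delta K'.
Proof. by move=> KK hE n /hE; apply: le_lt_trans. Qed.

Lemma covering_gt_nonempty E delta K :
  0 <= K -> covering_gt E delta K -> exists x, E x.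
Proof.
move=> K0 hE; apply: boolp.contrapT => nE.
have : K < 0%:R.
  apply: hE; exists (fun _ => set0); split => // x Ex.
  by exfalso; apply: nE; exists x.
by rewrite ltNge K0.
Qed.

Lemma coverable_gt0 E delta n : (exists x, E x) -> coverable E delta n -> (0 < n)%N.
Proof. by move=> [x Ex] [F [/(_ x Ex) [i + _] _]]; apply: leq_ltn_trans. Qed.

Lemma coverable_setU A B delta n m :
  coverable A delta n -> coverable B delta m -> coverable (A `|` B) delta (n + m).
Proof.
move=> [F [F1 F2]] [G [G1 G2]].
exists (fun i => if (i < n)%N then F i else G (i - n)%N); split.
  move=> x [/F1 [i ilt Fi]|/G1 [i ilt Gi]].
    by exists i; [rewrite ltn_addr|rewrite ilt].
  exists (n + i)%N; first by rewrite ltn_add2l.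
  by rewrite ltnNge leq_addr /= addKn.
move=> i ilt; case: ifP => hi; first exact: F2.
by apply: G2; rewrite ltn_subLR //; lia.
Qed.

Lemma covering_gt_setU A B delta K : covering_gt (A `|` B) delta (K + K) ->
  covering_gt A delta K \/ covering_gt B delta K.
Proof.
move=> hAB; apply: boolp.contrapT => /boolp.not_orP [nA nB].
move/boolp.existsNP: nA => [n /boolp.not_implyP [cA /negP]]; rewrite -leNgt => hn.
move/boolp.existsNP: nB => [m /boolp.not_implyP [cB /negP]]; rewrite -leNgt => hm.
by have := hAB _ (coverable_setU cA cB); rewrite natrD; lra.
Qed.

(* Pigeonhole: two separated points cannot share a set of diameter <= delta. *)
Lemma separated_coverable_le E delta p n :
  separated E delta p -> coverable E delta n -> (p <= n)%N.
Proof.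
move=> [f [f1 f2]] [F [F1 F2]].
have : forall i : 'I_p, exists j : 'I_n, F j (f i).
  move=> i; have [j jn Fj] := F1 _ (f1 _ (ltn_ord i)).
  by exists (Ordinal jn).
move=> /boolp.choice [g hg].
have g_inj : injective g.
  move=> i i' gii'; apply: ord_inj; apply: boolp.contrapT => ne.
  have := f2 _ _ (ltn_ord i) (ltn_ord i') ne.
  have := hg i; rewrite gii' => hgi.
  by rewrite ltNge (F2 _ (ltn_ord (g i')) _ _ hgi (hg i')).
by have := leq_card g g_inj; rewrite !card_ord.
Qed.

Hypothesis d_metric : is_metric d.

(* Greedy choice: the closed delta-balls around the points already chosen
   have diameter <= 2 delta, so they cannot cover E. *)
Lemma covering_gt_separated E delta k :
  covering_gt E (2 * delta) k%:R -> separated E delta k.+1.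
Proof.
case: d_metric => _ [_ [dsym dtri]].
elim: k => [|k IH] hE.
  have [x Ex] := covering_gt_nonempty (lexx 0) hE.
  by exists (fun _ => x); split => // i j; rewrite !ltnS !leqn0 => /eqP-> /eqP->.
have /IH [f [f1 f2]] : covering_gt E (2 * delta) k%:R.
  by apply: covering_gtW hE; rewrite ler_nat.
have [x [Ex hx]] : exists x, E x /\ forall i, (i < k.+1)%N -> delta < d (f i) x.
  apply: boolp.contrapT => hn.
  have : (k.+1%:R : R) < k.+1%:R.
    apply: hE; exists (fun i => [set y | d (f i) y <= delta]); split.
      move=> y Ey; apply: boolp.contrapT => ny; apply: hn; exists y; split => //.
      move=> i ik; rewrite ltNge; apply/negP => dl; apply: ny; by exists i.
    move=> i _ y z /= hy hz; have := dtri y (f i) z; rewrite (dsym y (f i)); lra.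
  by rewrite ltxx.
have ltk i : (i < k.+2)%N -> i != k.+1 -> (i < k.+1)%N.
  by rewrite ltnS leq_eqVlt => /orP[/eqP->|//]; rewrite eqxx.
exists (fun i => if i == k.+1 then x else f i); split.
  move=> i ilt; case: (eqVneq i k.+1) => [_|ik]; first exact: Ex.
  exact: f1 (ltk _ ilt ik).
move=> i j il jl ne.
case: (eqVneq i k.+1) => [ei|ik]; case: (eqVneq j k.+1) => [ej|jk].
- by exfalso; apply: ne; rewrite ei ej.
- by rewrite dsym; apply: hx; apply: ltk.
- by apply: hx; apply: ltk.
- by apply: f2 => //; apply: ltk.
Qed.

End Covers.

Lemma separated_prod (R : realType) (X Y : Type) (dX : X -> X -> R)
    (dY : Y -> Y -> R) (A : set X) (B : X -> set Y) (F : set (X * Y)) delta p q :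
  (forall x y, A x -> B x y -> F (x, y)) -> (0 < p)%N -> (0 < q)%N ->
  separated dX A delta p -> (forall x, A x -> separated dY (B x) delta q) ->
  separated (max_metric dX dY) F delta (p * q).
Proof.
move=> hF p0 q0 [f [f1 f2]] hB.
have [y0 _] : exists y, B (f 0%N) y.
  by have [g [g1 _]] := hB _ (f1 _ p0); exists (g 0%N); apply: g1.
have : forall i, exists g : nat -> Y, (i < p)%N ->
   (forall j, (j < q)%N -> B (f i) (g j)) /\
   (forall j j', (j < q)%N -> (j' < q)%N -> j <> j' -> delta < dY (g j) (g j')).
  move=> i; case: (ltnP i p) => ip.
    by have [g hg] := hB _ (f1 _ ip); exists g.
  by exists (fun=> y0).
move=> /boolp.choice [g hg].
have hdiv l : (l < p * q)%N -> (l %/ q < p)%N by rewrite ltn_divLR.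
exists (fun l => (f (l %/ q)%N, g (l %/ q)%N (l %% q)%N)); split.
  move=> l lt; have lq := hdiv _ lt; apply: hF; first exact: f1.
  by have [h1 _] := hg _ lq; apply: h1; rewrite ltn_pmod.
move=> l l' lt lt' ne; rewrite /max_metric /= lt_max; apply/orP.
case: (eqVneq (l %/ q)%N (l' %/ q)%N) => e.
  right; rewrite -e; have [_ h2] := hg _ (hdiv _ lt).
  apply: h2; rewrite ?ltn_pmod //.
  by move=> em; apply: ne; rewrite (divn_eq l q) (divn_eq l' q) e em.
by left; apply: f2; [exact: hdiv|exact: hdiv|apply/eqP].
Qed.

Section BoxRatio.
Variables (R : realType) (T : Type) (d : T -> T -> R).

Lemma box_ratio_gt_covering E delta t : 0 < delta < 1 -> (exists x, E x) ->
  (t%:E < box_ratio d E delta)%E -> covering_gt d E delta (expR (t * - ln delta)).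
Proof.
move=> /andP[d0 d1] nE; rewrite /box_ratio.
have lnd : ln delta < 0 by apply: ln_lt0; rewrite d0 d1.
have Nle n : coverable d E delta n -> (covering_number d E delta <= n%:R%:E)%E.
  by move=> cn; apply: ereal_inf_lbound; exists n.
have N1 : (1%:E <= covering_number d E delta)%E.
  apply: le_ereal_inf_tmp => _ [n cn <-]; rewrite lee_fin ler1n.
  exact: coverable_gt0 cn.
move: Nle N1; case: (covering_number d E delta) => [r| |] /= Nle N1.
- rewrite lee_fin in N1.
  rewrite lte_fin ltr0_norm // ltr_pdivlMr; last by rewrite oppr_gt0.
  move=> tl n /Nle; rewrite lee_fin => rn.
  apply: lt_le_trans rn; rewrite -[r in _ < r]lnK; last by rewrite posrE; lra.
  by rewrite ltr_expR.
- by move=> _ n /Nle; rewrite leye_eq.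
- by move: N1; rewrite leeNy_eq.
Qed.

Lemma covering_gt_box_ratio E delta K : 0 < delta < 1 -> 0 < K ->
  covering_gt d E delta K -> ((ln K / - ln delta)%:E <= box_ratio d E delta)%E.
Proof.
move=> /andP[d0 d1] K0 hE; rewrite /box_ratio.
have lnd : ln delta < 0 by apply: ln_lt0; rewrite d0 d1.
have NK : (K%:E <= covering_number d E delta)%E.
  by apply: le_ereal_inf_tmp => _ [n cn <-]; rewrite lee_fin; exact/ltW/hE.
case: ifPn => [_|]; first exact: leey.
case: (covering_number d E delta) NK => [r| |] //= + _; rewrite !lee_fin => Kr.
rewrite ltr0_norm // ler_pM2r ?invr_gt0 ?oppr_gt0 //.
by rewrite ler_ln ?posrE //; lra.
Qed.

End BoxRatio.

Lemma le_ereal_lt_real (R : realType) (x y : \bar R) :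
  (forall t : R, (t%:E < x)%E -> (t%:E <= y)%E) -> (x <= y)%E.
Proof.
case: x => [a||]; case: y => [b||] h; rewrite ?leey ?leNye //.
- rewrite lee_fin leNgt; apply/negP => ba.
  have := h ((a + b) / 2); rewrite !lte_fin !lee_fin => h'.
  have : (a + b) / 2 <= b by apply: h'; lra.
  lra.
- by have := h (a - 1); rewrite lte_fin leeNy_eq => /(_ ltac:(lra)).
- by have := h (b + 1) (ltry _); rewrite lee_fin => ?; exfalso; lra.
- by have := h 0 (ltry _); rewrite leeNy_eq.
Qed.

Lemma leeD_lt_real (R : realType) (a b c : \bar R) :
  (forall al be : R, (al%:E < a)%E -> (be%:E < b)%E -> ((al + be)%:E <= c)%E) ->
  (a + b <= c)%E.
Proof.
move=> h; apply: le_ereal_lt_real => t.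
case: a h => [a||]; case: b => [b||] h //=.
- rewrite -EFinD lte_fin => ht.
  have := h (a - (a + b - t) / 2) (b - (a + b - t) / 2).
  rewrite !lte_fin => /(_ ltac:(lra) ltac:(lra)).
  by have -> : a - (a + b - t) / 2 + (b - (a + b - t) / 2) = t by lra.
- move=> _; have := h (a - 1) (t - a + 1); rewrite lte_fin => /(_ ltac:(lra) (ltry _)).
  by have -> : a - 1 + (t - a + 1) = t by lra.
- move=> _; have := h (t - b + 1) (b - 1) (ltry _); rewrite lte_fin => /(_ ltac:(lra)).
  by have -> : t - b + 1 + (b - 1) = t by lra.
- by move=> _; have := h t 0 (ltry _) (ltry _); rewrite addr0.
Qed.

Section BoxDim.
Variables (R : realType) (T : Type) (d : T -> T -> R).

Lemma lower_box_dim_gt E (t : R) : (t%:E < lower_box_dim d E)%E ->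
  (exists x, E x) /\ exists2 r, 0 < r &
    forall delta, 0 < delta < r -> (t%:E < box_ratio d E delta)%E.
Proof.
rewrite /lower_box_dim; case: ifPn => [_|nE]; first by rewrite ltNge leNye.
move=> /ereal_sup_gt [_ [r r0 <-] ht]; split; first exact/set0P.
exists r => // delta hd; apply: (lt_le_trans ht).
by apply: ereal_inf_lbound; exists delta.
Qed.

Lemma lower_box_dim_ge E (t r : R) : (exists x, E x) -> 0 < r ->
  (forall delta, 0 < delta < r -> (t%:E <= box_ratio d E delta)%E) ->
  (t%:E <= lower_box_dim d E)%E.
Proof.
move=> nE r0 h; rewrite /lower_box_dim ifN; last exact/set0P.
apply: le_trans (ereal_sup_ubound _); last by exists r.
by apply: le_ereal_inf_tmp => _ [delta hd <-]; apply: h.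
Qed.

Lemma upper_box_dim_gt E (t : R) : (t%:E < upper_box_dim d E)%E ->
  (exists x, E x) /\ forall r, 0 < r ->
    exists2 delta, 0 < delta < r & (t%:E < box_ratio d E delta)%E.
Proof.
rewrite /upper_box_dim; case: ifPn => [_|nE]; first by rewrite ltNge leNye.
move=> ht; split=> [|r r0]; first exact/set0P.
have : (t%:E < ereal_sup [set box_ratio d E delta | delta in
            [set delta : R | (0 < delta < r)%R]])%E.
  by apply: (lt_le_trans ht); apply: ereal_inf_lbound; exists r.
by move=> /ereal_sup_gt [_ [delta hd <-] h]; exists delta.
Qed.

Lemma upper_box_dim_ge E (t : R) : (exists x, E x) ->
  (forall r, 0 < r ->
    exists2 delta, 0 < delta < r & (t%:E <= box_ratio d E delta)%E) ->
  (t%:E <= upper_box_dim d E)%E.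
Proof.
move=> nE h; rewrite /upper_box_dim ifN; last exact/set0P.
apply: le_ereal_inf_tmp => _ [r r0 <-].
have [delta hd hr] := h r r0.
by apply: le_trans hr _; apply: ereal_sup_ubound; exists delta.
Qed.

End BoxDim.

Lemma ln_double_ratio_ge (R : realType) (s e : R) : 0 < e ->
  exists2 r, 0 < r <= 1/2 & forall delta, 0 < delta < r ->
    s - e <= (s * - ln (2 * delta)) / - ln delta.
Proof.
move=> e0; exists (Num.min (1/2) (expR (- (`|s| * ln 2) / e))).
  by rewrite lt_min expR_gt0 ge_min lexx andbT; apply/andP; split; lra.
move=> delta /andP[d0]; rewrite lt_min => /andP[dh dex].
have lnd : ln delta < 0 by apply: ln_lt0; rewrite d0 /=; lra.
have ln2 : 0 < ln (2 : R) by apply: ln_gt0; lra.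
have h1 : ln delta < - (`|s| * ln 2) / e.
  by rewrite -[X in _ < X]expRK ltr_ln ?posrE ?expR_gt0.
have h2 : `|s| * ln 2 < e * - ln delta.
  by move: h1; rewrite ltr_pdivlMr // => h1; lra.
have h3 : s * ln 2 <= `|s| * ln 2 by rewrite ler_pM2r // ler_norm.
by rewrite lnM ?posrE // ler_pdivlMr; lra.
Qed.

Section ProductPiece.
Variables (R : realType) (X Y : Type) (dX : X -> X -> R) (dY : Y -> Y -> R).
Hypotheses (dX_metric : is_metric dX) (dY_metric : is_metric dY).
Variables (A : set X) (B : X -> set Y) (F : set (X * Y)).
Hypothesis AB_sub_F : forall x y, A x -> B x y -> F (x, y).

Lemma box_ratio_prod_ge (al be delta : R) : 0 < delta -> 2 * delta < 1 ->
  covering_gt dX A (2 * delta) (expR (al * - ln (2 * delta))) ->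
  (forall x, A x -> covering_gt dY (B x) (2 * delta) (expR (be * - ln (2 * delta)))) ->
  ((((al + be) * - ln (2 * delta)) / - ln delta)%:E
     <= box_ratio (max_metric dX dY) F delta)%E.
Proof.
move=> d0 d1 hA hB.
set KA := expR (al * - ln (2 * delta)).
set KB := expR (be * - ln (2 * delta)).
have KA0 : 0 < KA by apply: expR_gt0.
have KB0 : 0 < KB by apply: expR_gt0.
have sA : separated dX A delta (Num.truncn KA).+1.
  by apply: covering_gt_separated => //; apply: covering_gtW hA; rewrite truncn_le ltW.
have sB x : A x -> separated dY (B x) delta (Num.truncn KB).+1.
  move=> Ax; apply: covering_gt_separated => //; apply: covering_gtW (hB x Ax).
  by rewrite truncn_le ltW.
have sF := separated_prod AB_sub_F (ltn0Sn _) (ltn0Sn _) sA sB.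
have hF : covering_gt (max_metric dX dY) F delta (KA * KB).
  move=> n cn; have := separated_coverable_le sF cn.
  rewrite -(ler_nat R) natrM; apply: lt_le_trans.
  by apply: ltr_pM; rewrite ?truncnS_gt // ltW.
have := covering_gt_box_ratio _ _ hF; rewrite d0 mulr_gt0 //=.
move=> /(_ ltac:(lra) isT).
by rewrite lnM ?posrE // !expRK -mulrDl.
Qed.

Lemma fibre_nonempty (be r : R) : 0 < r -> (exists x, A x) ->
  (forall x, A x -> forall delta, 0 < delta < r ->
     covering_gt dY (B x) delta (expR (be * - ln delta))) ->
  exists p, F p.
Proof.
move=> r0 [x Ax] hB.
have r2 : 0 < r / 2 < r by apply/andP; split; lra.
have [y Bxy] := covering_gt_nonempty (ltW (expR_gt0 _)) (hB x Ax _ r2).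
by exists (x, y); apply: AB_sub_F.
Qed.

Lemma lower_box_dim_prod_ge (al be r : R) : 0 < r ->
  (al%:E < lower_box_dim dX A)%E ->
  (forall x, A x -> forall delta, 0 < delta < r ->
     covering_gt dY (B x) delta (expR (be * - ln delta))) ->
  ((al + be)%:E <= lower_box_dim (max_metric dX dY) F)%E.
Proof.
move=> r0 /lower_box_dim_gt [nA [ra ra0 hA]] hB.
apply/lee_subgt0Pr => e e0; rewrite -EFinB.
have [r1 /andP[r10 r1h] hs] := ln_double_ratio_ge (al + be) e0.
apply: (@lower_box_dim_ge _ _ _ _ _ (Num.min r1 (Num.min (ra / 2) (r / 2)))).
- exact: fibre_nonempty r0 nA hB.
- by rewrite !lt_min r10 /=; apply/andP; split; lra.
move=> delta /andP[dp]; rewrite !lt_min => /and3P[dr1 dra dr].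
apply: le_trans (box_ratio_prod_ge _ _ _ _) => //.
- by rewrite lee_fin; apply: hs; rewrite dp dr1.
- lra.
- apply: box_ratio_gt_covering nA _; first by apply/andP; split; lra.
  by apply: hA; apply/andP; split; lra.
- by move=> x Ax; apply: hB => //; apply/andP; split; lra.
Qed.

Lemma upper_box_dim_prod_ge (al be r : R) : 0 < r ->
  (al%:E < upper_box_dim dX A)%E ->
  (forall x, A x -> forall delta, 0 < delta < r ->
     covering_gt dY (B x) delta (expR (be * - ln delta))) ->
  ((al + be)%:E <= upper_box_dim (max_metric dX dY) F)%E.
Proof.
move=> r0 /upper_box_dim_gt [nA hA] hB.
apply/lee_subgt0Pr => e e0; rewrite -EFinB.
have [r1 /andP[r10 r1h] hs] := ln_double_ratio_ge (al + be) e0.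
apply: upper_box_dim_ge; first exact: fibre_nonempty r0 nA hB.
move=> eps eps0.
have [ra /andP[ra0]] := hA (Num.min (2 * eps) (Num.min (2 * r1) r))
   ltac:(rewrite !lt_min; apply/and3P; split; lra).
rewrite !lt_min => /and3P[rae rar1 rar] hr.
exists (ra / 2); first by apply/andP; split; lra.
apply: le_trans (box_ratio_prod_ge _ _ _ _) => //.
- by rewrite lee_fin; apply: hs; apply/andP; split; lra.
- lra.
- lra.
- have -> : 2 * (ra / 2) = ra by lra.
  by apply: box_ratio_gt_covering nA hr; apply/andP; split; lra.
- by move=> x Ax; apply: hB => //; apply/andP; split; lra.
Qed.

End ProductPiece.

Section UpperBoxUnion.
Variables (R : realType) (T : Type) (d : T -> T -> R).

Let often_covering_gt (C : set T) (t c : R) :=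
  forall r, 0 < r -> exists2 delta, 0 < delta < Num.min r (Num.min 1 c) &
    covering_gt d C delta (expR (t * - ln delta - ln 2)).

(* Losing a factor 2 in N_delta costs ln 2 / |ln delta| <= e in the ratio
   once delta < exp (- ln 2 / e). *)
Lemma upper_box_dim_ge_often (C : set T) (t e : R) : 0 < e ->
  often_covering_gt C t (expR (- ln 2 / e)) -> ((t - e)%:E <= upper_box_dim d C)%E.
Proof.
move=> e0 hC; have ln2 : 0 < ln (2 : R) by apply: ln_gt0; lra.
apply: upper_box_dim_ge.
  have [delta _ hE] := hC 1 ltr01.
  exact: covering_gt_nonempty (ltW (expR_gt0 _)) hE.
move=> r r0; have [delta /andP[dp]] := hC r r0.
rewrite !lt_min => /and3P[dr d1 dc] hE.
exists delta; first by rewrite dp dr.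
have hd : 0 < delta < 1 by rewrite dp d1.
apply: le_trans (covering_gt_box_ratio hd (expR_gt0 _) hE).
have lnd : ln delta < 0 by apply: ln_lt0.
have : ln delta < - ln 2 / e by rewrite -[X in _ < X]expRK ltr_ln ?posrE ?expR_gt0.
rewrite ltr_pdivlMr // => h1.
by rewrite lee_fin expRK ler_pdivlMr; lra.
Qed.

Lemma upper_box_dim_setU (A B : set T) :
  (upper_box_dim d (A `|` B) <=
   Order.max (upper_box_dim d A) (upper_box_dim d B))%E.
Proof.
apply: le_ereal_lt_real => t /upper_box_dim_gt [nAB h].
apply/lee_subgt0Pr => e e0; rewrite -EFinB.
set c := expR (- ln 2 / e).
have [HA|HB] : often_covering_gt A t c \/ often_covering_gt B t c.
- apply: boolp.contrapT => /boolp.not_orP [].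
  move=> /boolp.existsNP [rA /boolp.not_implyP [rA0 nA]].
  move=> /boolp.existsNP [rB /boolp.not_implyP [rB0 nB]].
  have [delta /andP[dp]] := h (Num.min (Num.min rA rB) (Num.min 1 c))
    ltac:(by rewrite !lt_min rA0 rB0 ltr01 expR_gt0).
  rewrite !lt_min => /andP[/andP[dA dB] /andP[d1 dc]] hr.
  have hd : 0 < delta < 1 by rewrite dp d1.
  have := box_ratio_gt_covering hd nAB hr.
  have -> : expR (t * - ln delta) =
            expR (t * - ln delta - ln 2) + expR (t * - ln delta - ln 2).
    by rewrite expRD expRN lnK ?posrE // -splitr.
  case/covering_gt_setU => hE.
  + by apply: nA; exists delta; rewrite // !lt_min dp dA d1 dc.
  + by apply: nB; exists delta; rewrite // !lt_min dp dB d1 dc.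
- by rewrite le_max (upper_box_dim_ge_often e0 HA).
- by rewrite le_max (upper_box_dim_ge_often e0 HB) orbT.
Qed.

Lemma upper_box_dim_bigsetU (E : nat -> set T) N :
  (upper_box_dim d (fun p => exists2 n, (n <= N)%N & E n p) <=
   ereal_sup [set upper_box_dim d (E n) | n in [set: nat]])%E.
Proof.
elim: N => [|N IH].
  have -> : (fun p => exists2 n, (n <= 0)%N & E n p) = E 0%N.
    apply/seteqP; split => p /=; first by move=> [n]; rewrite leqn0 => /eqP->.
    by exists 0%N.
  by apply: ereal_sup_ubound; exists 0%N.
have -> : (fun p => exists2 n, (n <= N.+1)%N & E n p) =
    (fun p => exists2 n, (n <= N)%N & E n p) `|` E N.+1.
  apply/seteqP; split => p /=.
    move=> [n]; rewrite leq_eqVlt => /orP[/eqP->|]; first by right.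
    by rewrite ltnS => nN En; left; exists n.
  by move=> [[n nN En]|EN]; [exists n => //; apply: leqW|exists N.+1].
apply: le_trans (upper_box_dim_setU _ _) _.
by rewrite ge_max IH /=; apply: ereal_sup_ubound; exists N.+1.
Qed.

End UpperBoxUnion.

Lemma ereal_inf_sup_gt (R : realType) (I : Type) (P : set I)
    (f : I -> nat -> \bar R) (i : I) (t : \bar R) :
  (t < ereal_inf [set ereal_sup [set f j n | n in [set: nat]] | j in P])%E ->
  P i -> exists n, (t < f i n)%E.
Proof.
move=> ht Pi.
have : (t < ereal_sup [set f i n | n in [set: nat]])%E.
  by apply: lt_le_trans ht _; apply: ereal_inf_lbound; exists i.
by move=> /ereal_sup_gt [_ [n _ <-] h]; exists n.
Qed.

Section PackingPiece.
Variables (R : realType) (T : Type) (d : T -> T -> R).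
Variables (t : R) (En : nat -> set T).
Hypothesis En_cover : forall p, exists n, En n p.

Lemma packing_dim_gt_piece : (t%:E < packing_dim d setT)%E ->
  exists n, (t%:E < upper_box_dim d (En n))%E.
Proof.
move=> ht; apply: (ereal_inf_sup_gt (f := fun En n => upper_box_dim d (En n)) ht).
by move=> p _; have [n Enp] := En_cover p; exists n.
Qed.

Lemma lower_packing_dim_gt_piece : (t%:E < lower_packing_dim d setT)%E ->
  exists n, (t%:E < lower_box_dim d (En n))%E.
Proof.
move=> ht; apply: (ereal_inf_sup_gt (f := fun En n => lower_box_dim d (En n)) ht).
by move=> p _; have [n Enp] := En_cover p; exists n.
Qed.

Lemma directed_lower_packing_dim_gt_piece : (forall n, En n `<=` En n.+1) ->
  (t%:E < directed_lower_packing_dim d setT)%E ->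
  exists n, (t%:E < lower_box_dim d (En n))%E.
Proof.
move=> En_incr ht.
apply: (ereal_inf_sup_gt (f := fun En n => lower_box_dim d (En n)) ht).
split=> //; apply/seteqP; split => p //= _.
by have [n Enp] := En_cover p; exists n.
Qed.

End PackingPiece.

(* The scale threshold is taken of the form 1/(k+1) so that it can serve as
   a countable label. *)
Lemma lower_box_dim_gt_covering (R : realType) (T : Type) (d : T -> T -> R)
    (C : set T) (t : R) : (t%:E < lower_box_dim d C)%E ->
  exists k : nat, forall delta, 0 < delta < k.+1%:R^-1 ->
    covering_gt d C delta (expR (t * - ln delta)).
Proof.
move=> /lower_box_dim_gt [nC [r r0 h]].
exists (Num.truncn r^-1) => delta /andP[dp dk].
have kr : (Num.truncn r^-1).+1%:R^-1 < r.
  by rewrite invf_plt ?posrE ?ltr0Sn // truncnS_gt.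
have k1 : (Num.truncn r^-1).+1%:R^-1 <= 1 :> R.
  by rewrite invr_le1 ?unitfE ?pnatr_eq0 // ?ltr0Sn // ler1n.
apply: box_ratio_gt_covering nC (h _ _).
  by rewrite dp /=; apply: lt_le_trans dk k1.
by rewrite dp /=; apply: lt_trans kr.
Qed.

Lemma subset_chain_le (T : Type) (Fn : nat -> set T) :
  (forall n, Fn n `<=` Fn n.+1) -> forall n m, (n <= m)%N -> Fn n `<=` Fn m.
Proof.
move=> Fn_incr n; elim=> [|m IH]; first by rewrite leqn0 => /eqP->.
by rewrite leq_eqVlt => /orP[/eqP->//|]; rewrite ltnS => /IH h p /h /Fn_incr.
Qed.

Section Fibres.
Variables (R : realType) (X Y : Type) (dY : Y -> Y -> R).
Variables (E : nat -> set (X * Y)) (be : R).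
Hypothesis E_cover : forall p, exists n, E n p.

Definition fibre (F : set (X * Y)) (x : X) : set Y := [set y | F (x, y)].

Lemma directed_fibre_threshold : (forall n, E n `<=` E n.+1) ->
  (be%:E < directed_lower_packing_dim dY setT)%E ->
  exists g : X -> nat, forall x m, (g x <= m)%N ->
    forall delta, 0 < delta < m.+1%:R^-1 ->
      covering_gt dY (fibre (E m) x) delta (expR (be * - ln delta)).
Proof.
move=> E_incr hbe.
suff : forall x, exists m0 : nat, forall m, (m0 <= m)%N ->
    forall delta, 0 < delta < m.+1%:R^-1 ->
      covering_gt dY (fibre (E m) x) delta (expR (be * - ln delta)).
  by move=> /boolp.choice [g hg]; exists g.
move=> x; have [n hn] := directed_lower_packing_dim_gt_piece (En := fun n => fibre (E n) x)
  (fun y => E_cover (x, y)) (fun n y => @E_incr n (x, y)) hbe.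
have [k hk] := lower_box_dim_gt_covering hn.
exists (maxn n k) => m hm delta /andP[dp dm] N [F [F1 F2]].
have hd : 0 < delta < k.+1%:R^-1.
  by rewrite dp /= (lt_le_trans dm) // lef_pV2 ?posrE ?ltr0Sn // ler_nat; lia.
apply: (hk _ hd); exists F; split => // y Ey; apply: F1.
by apply: (subset_chain_le E_incr (n := n)) => //; lia.
Qed.

Lemma fibre_threshold : (be%:E < lower_packing_dim dY setT)%E ->
  exists g : X -> nat * nat, forall x delta, 0 < delta < (g x).2.+1%:R^-1 ->
    covering_gt dY (fibre (E (g x).1) x) delta (expR (be * - ln delta)).
Proof.
move=> hbe.
suff : forall x, exists nk : nat * nat, forall delta, 0 < delta < nk.2.+1%:R^-1 ->
    covering_gt dY (fibre (E nk.1) x) delta (expR (be * - ln delta)).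
  by move=> /boolp.choice [g hg]; exists g.
move=> x.
have [n hn] := lower_packing_dim_gt_piece (En := fun n => fibre (E n) x)
  (fun y => E_cover (x, y)) hbe.
by have [k hk] := lower_box_dim_gt_covering hn; exists (n, k).
Qed.

End Fibres.

Section ProductDims.
Variables (R : realType) (X Y : Type) (dX : X -> X -> R) (dY : Y -> Y -> R).
Hypotheses (dX_metric : is_metric dX) (dY_metric : is_metric dY).

Lemma packing_dim_prod_ge :
  (packing_dim dX setT + directed_lower_packing_dim dY setT
     <= packing_dim (max_metric dX dY) setT)%E.
Proof.
apply: leeD_lt_real => al be hal hbe.
apply: le_ereal_inf_tmp => _ [E E_cover <-].
pose G N := fun p => exists2 n, (n <= N)%N & E n p.
have G_incr N : G N `<=` G N.+1 by move=> p [n nN Enp]; exists n => //; apply: leqW.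
have G_cover p : exists N, G N p by have [n _ Enp] := E_cover p I; exists n, n.
have [g hg] := directed_fibre_threshold G_cover G_incr hbe.
have [m hm] := packing_dim_gt_piece (En := fun m => [set x | (g x <= m)%N])
  (fun x => ex_intro _ (g x) (leqnn _)) hal.
have m0 : 0 < m.+1%:R^-1 :> R by rewrite invr_gt0 ltr0Sn.
apply: le_trans (upper_box_dim_prod_ge dX_metric dY_metric (F := G m)
  (fun x y _ h => h) m0 hm (fun x gx => hg x m gx)) _.
exact: upper_box_dim_bigsetU.
Qed.

Lemma directed_lower_packing_dim_prod_ge :
  (directed_lower_packing_dim dX setT + directed_lower_packing_dim dY setT
     <= directed_lower_packing_dim (max_metric dX dY) setT)%E.
Proof.
apply: leeD_lt_real => al be hal hbe.
apply: le_ereal_inf_tmp => _ [E [E_incr E_union] <-].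
have E_cover p : exists n, E n p.
  have [n _ Enp] : (\bigcup_n E n) p by rewrite E_union.
  by exists n.
have [g hg] := directed_fibre_threshold E_cover E_incr hbe.
have [m hm] := directed_lower_packing_dim_gt_piece
  (En := fun m => [set x | (g x <= m)%N])
  (fun x => ex_intro _ (g x) (leqnn _)) (fun m x gx => leqW gx) hal.
have m0 : 0 < m.+1%:R^-1 :> R by rewrite invr_gt0 ltr0Sn.
apply: le_trans (lower_box_dim_prod_ge dX_metric dY_metric (F := E m)
  (fun x y _ h => h) m0 hm (fun x gx => hg x m gx)) _.
by apply: ereal_sup_ubound; exists m.
Qed.

(* Without directedness, X is split according to the pair (index, scale label)
   attached to each point, encoded as a natural number by [pickle]. *)
Lemma lower_packing_dim_prod_ge :
  (lower_packing_dim dX setT + lower_packing_dim dY setT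
     <= lower_packing_dim (max_metric dX dY) setT)%E.
Proof.
apply: leeD_lt_real => al be hal hbe.
apply: le_ereal_inf_tmp => _ [E E_cover' <-].
have E_cover p : exists n, E n p by have [n _ Enp] := E_cover' p I; exists n.
have [g hg] := fibre_threshold E_cover hbe.
have [j hj] := lower_packing_dim_gt_piece
  (En := fun j => [set x | pickle (g x) = j])
  (fun x => ex_intro _ (pickle (g x)) erefl) hal.
have [[x0 gx0] _] := lower_box_dim_gt hj.
have g_const x : pickle (g x) = j -> g x = g x0.
  by move=> gx; apply: (pcan_inj pickleK); rewrite gx gx0.
have k0 : 0 < (g x0).2.+1%:R^-1 :> R by rewrite invr_gt0 ltr0Sn.
have hB x : pickle (g x) = j -> forall delta, 0 < delta < (g x0).2.+1%:R^-1 ->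
    covering_gt dY (fibre (E (g x0).1) x) delta (expR (be * - ln delta)).
  by move=> /g_const gx; rewrite -gx; apply: hg.
apply: le_trans (lower_box_dim_prod_ge dX_metric dY_metric (F := E (g x0).1)
  (fun x y _ h => h) k0 hj hB) _.
by apply: ereal_sup_ubound; exists (g x0).1.
Qed.

End ProductDims.

Unset Implicit Arguments.
Theorem corollary4p5 (R : realType) (X : Type) (dX : X -> X -> R)
  (Y : Type) (dY : Y -> Y -> R) :
  is_metric dX -> is_metric dY ->
  let dXY := max_metric dX dY in
  [/\ (packing_dim dX setT + directed_lower_packing_dim dY setT
         <= packing_dim dXY setT)%E,
      (directed_lower_packing_dim dX setT + directed_lower_packing_dim dY setT
         <= directed_lower_packing_dim dXY setT)%E
    & (lower_packing_dim dX setT + lower_packing_dim dY setT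
         <= lower_packing_dim dXY setT)%E].
Proof.
move=> dX_metric dY_metric dXY; split.
- exact: packing_dim_prod_ge.
- exact: directed_lower_packing_dim_prod_ge.
- exact: lower_packing_dim_prod_ge.
Qed.
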